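(* Let $q>5$ be a prime power which is either odd or a power of $4$. Then every partition of $\mathbb F_q^*$ which is preserved by $G(q)$ consists of all the cosets of some subgroup of $\mathbb F_q^*$.
   Context: $\mathbb F_q$ is the field with $q$ elements, $\mathbb F_q^*$ its multiplicative group. $G(q)$ denotes the group of permutations of $\mathbb F_q^*$ generated by all permutations of $\mathbb F_q^*$ which can be represented as $c\mapsto ac^m+bc^n$ with $a,b\in\mathbb F_q^*$ and integers $0<m<n<q$. A partition $\mathcal P$ of $\mathbb F_q^*$ is preserved by $G(q)$ if for every part $S$ of $\mathcal P$ and every $g\in G(q)$, the set $g(S)$ is also a part of $\mathcal P$. *)

From HB Require Import structures.
From mathcomp Require Import all_boot all_order all_algebra all_fingroup all_field.
Set Implicit Arguments. Unset Strict Implicit. Unset Printing Implicit Defensive.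
Import GRing.Theory.
Local Open Scope ring_scope.

(* The multiplicative group F_q^* is modelled by {unit F} for a finite field F,
   with q = #|F|. *)

Definition binom_perm (F : finFieldType) (s : {perm {unit F}}) : bool :=
  [exists a : F, exists b : F, exists m : 'I_#|F|, exists n : 'I_#|F|,
    [&& a != 0, b != 0, (0 < m)%N, (m < n)%N &
     [forall c : {unit F}, val (s c) == a * (val c) ^+ m + b * (val c) ^+ n]]].

Definition Gq (F : finFieldType) : {group {perm {unit F}}} :=
  <<[set s : {perm {unit F}} | binom_perm s]>>%G.

Definition preserved_by (F : finFieldType) (G : {set {perm {unit F}}})
    (P : {set {set {unit F}}}) : Prop :=
  forall S, S \in P -> forall g, g \in G -> [set g x | x in S] \in P.

From HB Require Import structures.
From mathcomp Require Import all_boot all_order all_algebra all_fingroup all_field.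
From mathcomp Require Import all_solvable ring zify.
Set Implicit Arguments. Unset Strict Implicit. Unset Printing Implicit Defensive.
Import GRing.Theory FinRing.Theory.

(* If some permutation binomial s exists, then so does c |-> s(c) a for every
   a in F^*, hence every translation c |-> c a lies in G(q); and a partition
   of a group invariant under all translations consists of the cosets of the
   block containing 1.  Permutation binomials exist for the q at hand:
   - q odd: with t = (q - 1)/2 and r of order not dividing 4,
     (r^2 + 1) c + 2r c^(t+1) = c (r + c^t)^2 because c^t = +-1; its t-th
     power is c^t, which thus determines c;
   - q a power of 4: then 3 | q - 1, and for a non-cube w the additive map
     c |-> c^4 - w c = c (c^3 - w) has no nonzero root. *)

Section TranslationInvariantPartition.
Variable gT : finGroupType.
Local Open Scope group_scope.

Lemma rcosets_of_translation_invariant_partition (P : {set {set gT}}) :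
    partition P [set: gT] -> (forall S a, S \in P -> S :* a \in P) ->
  exists H : {group gT}, P = rcosets H [set: gT].
Proof.
move=> /and3P[/eqP coverP trivP P'0] P_rtr.
have inP x : pblock P x \in P by rewrite pblock_mem // coverP inE.
pose B := pblock P 1.
have B1 : 1 \in B by rewrite mem_pblock coverP inE.
have blockE S x : S \in P -> x \in S -> S = B :* x.
  move=> SP xS; rewrite -[S](rcosetKV x) /B (@def_pblock _ _ (S :* x^-1)) //.
    exact: P_rtr.
  by rewrite mem_rcoset invgK mul1g.
have B_sub b1 b2 : b1 \in B -> b2 \in B -> b1 * b2^-1 \in B.
  by move=> b1B b2B; rewrite (blockE B b2 (inP 1) b2B) mem_rcoset in b1B.
have gB : group_set B.
  apply/group_setP; split=> // b1 b2 b1B b2B.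
  by rewrite -[b2]invgK B_sub // -[_^-1]mul1g B_sub.
exists (Group gB); apply/setP=> S; apply/idP/rcosetsP=> [SP | [x _ ->]].
  have [x xS] : exists x, x \in S by apply/set0Pn; apply: contraNneq P'0 => <-.
  by exists x; rewrite ?inE // (blockE S x SP xS).
by rewrite /= -(blockE _ x (inP x)) // mem_pblock coverP inE.
Qed.

End TranslationInvariantPartition.

Section PermutationBinomials.
Variable F : finFieldType.
Local Open Scope ring_scope.

Definition binom_fun (a b : F) (m n : nat) (c : F) := a * c ^+ m + b * c ^+ n.

Definition mulu_perm (a : {unit F}) : {perm {unit F}} := perm (@mulIg _ a).

Lemma mulu_permE a x : mulu_perm a x = (x * a)%g.
Proof. by rewrite permE. Qed.

Lemma unit_neq0 (x : {unit F}) : val x != 0.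
Proof. by rewrite -unitfE (valP x). Qed.

Lemma binom_perm_of_inj (a b : F) (m n : nat) :
    a != 0 -> b != 0 -> (0 < m < n)%N -> (n < #|F|)%N ->
    {in [pred c | c != 0], forall c, binom_fun a b m n c != 0} ->
    {in [pred c | c != 0] &, injective (binom_fun a b m n)} ->
  exists s : {perm {unit F}}, binom_perm s.
Proof.
move=> a0 b0 /andP[m0 mn] nq f_neq0 f_inj.
pose fu (c : {unit F}) : {unit F} := insubd c (binom_fun a b m n (val c)).
have fuE c : val (fu c) = binom_fun a b m n (val c).
  by rewrite insubdK // unitfE f_neq0 ?inE ?unit_neq0.
have fu_inj : injective fu.
  by move=> c1 c2 /(congr1 val); rewrite !fuE => /f_inj /val_inj->; rewrite ?inE ?unit_neq0.
exists (perm fu_inj); apply/existsP; exists a; apply/existsP; exists b.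
apply/existsP; exists (Ordinal (ltn_trans mn nq)); apply/existsP; exists (Ordinal nq).
by rewrite a0 b0 m0 mn; apply/forallP=> c; rewrite permE fuE.
Qed.

Lemma binom_perm_mulu (s : {perm {unit F}}) (a : {unit F}) :
  binom_perm s -> binom_perm (s * mulu_perm a).
Proof.
case/existsP=> al /existsP[be /existsP[m /existsP[n]]].
case/and5P=> al0 be0 m0 mn /forallP sE.
apply/existsP; exists (al * val a); apply/existsP; exists (be * val a).
apply/existsP; exists m; apply/existsP; exists n.
rewrite !mulf_neq0 ?unit_neq0 // m0 mn; apply/forallP=> c.
rewrite permM mulu_permE val_unitM (eqP (sE c)) mulrDl.
by rewrite -!mulrA ![_ ^+ _ * val a]mulrC.
Qed.

Lemma mulu_perm_in_Gq : (exists s : {perm {unit F}}, binom_perm s) ->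
  forall a : {unit F}, mulu_perm a \in Gq F.
Proof.
case=> s bs a; have sG : s \in Gq F by rewrite mem_gen ?inE.
have saG : (s * mulu_perm a)%g \in Gq F by rewrite mem_gen ?inE ?binom_perm_mulu.
by rewrite -(mulKg s (mulu_perm a)) groupM ?groupV.
Qed.

Lemma expf_card_pred (x : F) : x != 0 -> x ^+ #|F|.-1 = 1.
Proof.
move=> x0; apply: (mulfI x0); rewrite mulr1 -exprS prednK ?expf_card //.
exact: ltn_trans (finNzRing_gt1 F).
Qed.

Lemma unit_generator : exists g : {unit F}, #[g]%g = #|F|.-1.
Proof.
have /cyclicP[g gen] := field_unit_group_cyclic [set: {unit F}]%G.
by exists g; rewrite /order -gen card_finField_unit.
Qed.

Lemma exists_expf_neq1 (n : nat) : (0 < n < #|F|.-1)%N ->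
  exists r : F, r != 0 /\ r ^+ n != 1.
Proof.
move=> /andP[n0 ltnq]; have [g og] := unit_generator.
exists (val g); split; first exact: unit_neq0.
apply: contraTneq ltnq => gn1; rewrite -og -leqNgt dvdn_leq // order_dvdn.
by apply/eqP/val_inj; rewrite val_unitX gn1.
Qed.

Lemma exists_non_power (d : nat) : (1 < d)%N -> (d %| #|F|.-1)%N ->
  exists w : F, w != 0 /\ forall c : F, c ^+ d != w.
Proof.
move=> d1 /dvdnP[j qE]; have [g og] := unit_generator.
have q0 : (0 < #|F|.-1)%N by rewrite -ltnS prednK ?finNzRing_gt1 // ltnW ?finNzRing_gt1.
exists (val g); split=> [|c]; first exact: unit_neq0.
apply/negP=> /eqP cg; have c0 : c != 0.
  by apply: contraTneq (unit_neq0 g) => c0; rewrite -cg c0 expr0n gtn_eqF ?(ltnW d1) ?eqxx.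
have : (#[g]%g %| j)%N.
  rewrite order_dvdn; apply/eqP/val_inj.
  by rewrite val_unitX /= -cg -exprM mulnC -qE expf_card_pred.
rewrite og => /dvdn_leq; nia.
Qed.

Lemma odd_card_two_neq0 : odd #|F| -> 2%:R != 0 :> F.
Proof.
move=> oddF; apply/negP=> /eqP two0.
have ch : 2 \in [pchar F] by rewrite inE two0 eqxx.
move: oddF (finNzRing_gt1 F); rewrite (card_pprimeChar ch) oddX orbF.
by case: (logn _ _).
Qed.

Section OddCharacteristic.
Hypothesis oddF : odd #|F|.
Local Notation t := #|F|./2.

Lemma expr_half_sqr (y : F) : y != 0 -> (y ^+ t) ^+ 2 = 1.
Proof.
move=> y0; rewrite -exprM muln2.
have -> : t.*2 = #|F|.-1 by rewrite -{2}(odd_double_half #|F|) oddF add1n.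
exact: expf_card_pred.
Qed.

Lemma binom_perm_exists_odd : (5 < #|F|)%N -> exists s : {perm {unit F}}, binom_perm s.
Proof.
move=> q5; have qE : #|F| = t.*2.+1 by rewrite -{1}(odd_double_half #|F|) oddF.
have [r [r0 r4]] : exists r : F, r != 0 /\ r ^+ 4 != 1.
  by apply: exists_expf_neq1; rewrite qE /=; lia.
have rD_sign_neq0 e : e ^+ 2 = 1 -> r + e != 0.
  move=> e2; apply: contra_neq r4 => /(canRL (addrK e)) ->.
  by rewrite sub0r -[4%N]/(2 * 2)%N exprM sqrrN e2 expr1n.
have fE (c : F) :
    c != 0 -> binom_fun (r ^+ 2 + 1) (2%:R * r) 1 t.+1 c = c * (r + c ^+ t) ^+ 2.
  by move=> c0; rewrite /binom_fun [c ^+ t.+1]exprS sqrrD expr_half_sqr //; ring.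
have f_half (c : F) : c != 0 -> binom_fun (r ^+ 2 + 1) (2%:R * r) 1 t.+1 c ^+ t = c ^+ t.
  move=> c0; rewrite fE // exprMn exprAC expr_half_sqr ?mulr1 //.
  by rewrite rD_sign_neq0 ?expr_half_sqr.
apply: (@binom_perm_of_inj (r ^+ 2 + 1) (2%:R * r) 1 t.+1).
- apply: contra_neq r4 => /(canRL (addrK 1)); rewrite add0r => r2.
  by rewrite -[4%N]/(2 * 2)%N exprM r2 sqrrN expr1n.
- by rewrite mulf_neq0 ?odd_card_two_neq0.
- by rewrite ltnS; lia.
- by rewrite qE; lia.
- by move=> c c0; rewrite fE // mulf_neq0 // expf_neq0 // rD_sign_neq0 ?expr_half_sqr.
move=> c1 c2 c10 c20 f12; have t12 : c1 ^+ t = c2 ^+ t.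
  by rewrite -f_half // f12 f_half.
move: f12; rewrite !fE // t12; apply: mulIf.
by rewrite expf_neq0 // rD_sign_neq0 ?expr_half_sqr.
Qed.

End OddCharacteristic.

Lemma binom_perm_exists_pow4 (k : nat) : #|F| = (4 ^ k)%N -> (5 < #|F|)%N ->
  exists s : {perm {unit F}}, binom_perm s.
Proof.
move=> qE q5.
have ch : 2 \in [pchar F] by apply: (@card_finPcharP F 2 (2 * k)); rewrite // qE expnM.
have [w [w0 w_cube]] : exists w : F, w != 0 /\ forall c : F, c ^+ 3 != w.
  by apply: exists_non_power => //; rewrite qE (dvdn_pred_predX 4 k).
pose f := binom_fun (- w) 1 1 4.
have fE (c : F) : f c = c * (c ^+ 3 - w) by rewrite /f /binom_fun; ring.
have frob (x y : F) : (x - y) ^+ 2 = x ^+ 2 - y ^+ 2.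
  by have := pFrobenius_autB_comm ch (mulrC x y); rewrite !pFrobenius_autE.
have fB c1 c2 : f (c1 - c2) = f c1 - f c2.
  by rewrite /f /binom_fun -[4%N]/(2 * 2)%N !exprM !frob; ring.
have f_neq0 (c : F) : c != 0 -> f c != 0 by move=> c0; rewrite fE mulf_neq0 // subr_eq0.
apply: (@binom_perm_of_inj (- w) 1 1 4).
- by rewrite oppr_eq0.
- exact: oner_neq0.
- by [].
- exact: ltnW.
- by move=> c; apply: f_neq0.
move=> c1 c2 _ _ f12; apply/subr0_eq/(contraNeq (f_neq0 _)).
by rewrite negbK fB /f f12 subrr.
Qed.

End PermutationBinomials.

Theorem corollary4p5 (F : finFieldType) :
  (5 < #|F|)%N ->
  (odd #|F| \/ exists k : nat, #|F| = 4 ^ k)%N ->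
  forall P : {set {set {unit F}}},
    partition P [set: {unit F}] ->
    preserved_by (Gq F) P ->
    exists H : {group {unit F}}, P = rcosets H [set: {unit F}].
Proof.
move=> q5 hq P partP presP.
apply: rcosets_of_translation_invariant_partition => // S a SP.
have binomF : exists s : {perm {unit F}}, binom_perm s.
  case: hq => [oddF | [k qE]]; first exact: binom_perm_exists_odd.
  exact: binom_perm_exists_pow4 qE q5.
suff -> : (S :* a)%g = [set mulu_perm a x | x in S].
  exact: presP (mulu_perm_in_Gq binomF a).
by rewrite -rcosetE /rcoset; apply: eq_imset => x; rewrite mulu_permE.
Qed.
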